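(* Let $R$ be a commutative ring with identity and let $\boldsymbol{a}=(a_0,a_1,a_2,\dots)\in H_R$ with $a_0\in R^*$. Then $\lambda_{+,0}(\boldsymbol{a})=(0,a_0,a_1,\dots)$ is invertible with respect to $\circ$, and $$\boldsymbol{a}^{-1}=\lambda_{-}\big(\lambda_{+,0}(\boldsymbol{a})^{(-1)}\big)\circ\lambda_{+,0}(\boldsymbol{a}),$$ where $\boldsymbol{a}^{-1}$ is the inverse of $\boldsymbol{a}$ for the Hurwitz product and $\boldsymbol{c}^{(-1)}$ denotes the inverse of $\boldsymbol{c}$ for $\circ$.
   Context: $R^*$ is the group of units of $R$. $H_R$ is the set of sequences $\boldsymbol{a}=(a_n)_{n\ge0}$ with $a_n\in R$; we write $\boldsymbol{a}[n]=a_n$. The Hurwitz product is $(\boldsymbol{a}\star\boldsymbol{b})_n=\sum_{h=0}^n\binom{n}{h}a_hb_{n-h}$, with identity $\bar{\boldsymbol{1}}=(1,0,0,\dots)$; $\boldsymbol{a}$ is $\star$-invertible iff $a_0\in R^*$, and $\boldsymbol{a}^{-1}$ denotes its $\star$-inverse. The exponential partial Bell polynomials are $Y_{0,0}=1$, $Y_{n,0}=0$ ($n\ge1$), $Y_{0,k}=0$ ($k\ge1$), and $Y_{n,k}(y_1,y_2,\dots)=\sum \frac{n!}{\prod_i j_i!\,(i!)^{j_i}}\prod_i y_i^{j_i}$, the sum over $(j_1,j_2,\dots)$ of nonnegative integers with $\sum_i j_i=k$, $\sum_i ij_i=n$ (integer coefficients). For $\boldsymbol{a}\in H_R$ and $\boldsymbol{b}\in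 H_R$ with $b_0=0$, the composition product is $(\boldsymbol{a}\circ\boldsymbol{b})_n=\sum_{k=0}^n a_k Y_{n,k}(b_1,\dots,b_{n-k+1})$ (when $\mathbb{Q}\subseteq R$ this is the sequence whose exponential generating function $\sum_n c_nt^n/n!$ is $A(B(t))$, $A,B$ the e.g.f.s of $\boldsymbol a,\boldsymbol b$). Its identity is $\boldsymbol{1}=(0,1,0,0,\dots)$; $\boldsymbol{b}$ is $\circ$-invertible iff $b_0=0$ and $b_1\in R^*$. The shift is $\lambda_-(a_0,a_1,a_2,\dots)=(a_1,a_2,\dots)$ and $\lambda_{+,0}(a_0,a_1,\dots)=(0,a_0,a_1,\dots)$. *)

From HB Require Import structures.
From mathcomp Require Import all_boot all_order all_algebra.
Set Implicit Arguments. Unset Strict Implicit. Unset Printing Implicit Defensive.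
Import GRing.Theory.
Local Open Scope ring_scope.

(* Elements of H_R are sequences a : nat -> R, with a[n] = a n. *)

Definition hmul (R : comPzRingType) (a b : nat -> R) : nat -> R :=
  fun n => \sum_(h < n.+1) ('C(n, h))%:R * a h * b (n - h)%N.

Definition hid (R : comPzRingType) : nat -> R := fun n => (n == 0)%N%:R.

(* exponential partial Bell polynomial Y_{n,k}(y_1, y_2, ...):
   sum over (j_1,...,j_n) (j_i stored at index i-1) with sum j_i = k and
   sum i*j_i = n, of n!/(prod j_i! (i!)^{j_i}) * prod y_i^{j_i}. *)
Definition bell (R : comPzRingType) (n k : nat) (y : nat -> R) : R :=
  \sum_(j : {ffun 'I_n -> 'I_n.+1} |
          ((\sum_(i < n) (j i : nat)) == k)%N &&
          ((\sum_(i < n) (i.+1 * j i)) == n)%N)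
     ((n`! %/ \prod_(i < n) ((j i)`! * (i.+1)`! ^ (j i)))%N)%:R
       * \prod_(i < n) y i.+1 ^+ (j i).

Definition ccomp (R : comPzRingType) (a b : nat -> R) : nat -> R :=
  fun n => \sum_(k < n.+1) a k * bell n k b.

Definition cid (R : comPzRingType) : nat -> R := fun n => (n == 1)%N%:R.

Definition lminus (R : comPzRingType) (a : nat -> R) : nat -> R := fun n => a n.+1.
Definition lplus0 (R : comPzRingType) (a : nat -> R) : nat -> R :=
  fun n => if n is m.+1 then a m else 0.

From HB Require Import structures.
From mathcomp Require Import all_boot all_order all_algebra.
From mathcomp Require Import zify ring.
From Stdlib Require Import FunctionalExtensionality.
Set Implicit Arguments. Unset Strict Implicit. Unset Printing Implicit Defensive.
Import GRing.Theory.

(* The heart of the proof is the chain rule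
     lminus (ccomp p q) = hmul (ccomp (lminus p) q) (lminus q),
   which comes from the recursion Y_{n+1,k+1}(y) = sum_i C(n,i) y_{i+1} Y_{n-i,k}(y)
   for the partial Bell polynomials, itself obtained by singling out the block of
   one distinguished element in the multinomial count of set partitions.
   By the chain rule and induction on the index, composition distributes over
   the Hurwitz product and is associative. A right inverse of a series b with
   b 0 = 0 and b 1 a unit can be solved for coefficient by coefficient; it again
   satisfies these hypotheses, so it has a right inverse of its own, which
   associativity forces to be b. Finally, shifting the identity
   ccomp c (lplus0 a) = cid R by the chain rule gives
   hmul (ccomp (lminus c) (lplus0 a)) a = lminus (cid R) = hid R. *)

(* A multiplicity function [f] describes a set partition type with [f t] blocks of
   size [t.+1]: it has [parts N f] blocks, [weight N f] elements, and
   [(weight N f)`! %/ denom N f] set partitions of that type. *)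
Definition parts N (f : nat -> nat) := \sum_(t < N) f t.
Definition weight N (f : nat -> nat) := \sum_(t < N) t.+1 * f t.
Definition denom N (f : nat -> nat) := \prod_(t < N) ((f t)`! * (t.+1)`! ^ f t).
Definition incr_at (f : nat -> nat) i t := f t + (t == i).
Definition decr_at (f : nat -> nat) i t := f t - (t == i).

Lemma big_incr_at (T : Type) (idx : T) (op : Monoid.com_law idx) N
    (F : nat -> nat -> T) f i (iN : i < N) :
  \big[op/idx]_(t < N) F t (incr_at f i t) =
  op (F i (f i).+1) (\big[op/idx]_(t < N | t != Ordinal iN) F t (f t)).
Proof.
rewrite (bigD1 (Ordinal iN)) //= /incr_at eqxx addn1; congr (op _ _).
by apply: eq_bigr => t; rewrite -val_eqE /= => /negbTE ->; rewrite addn0.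
Qed.

Lemma parts_incr_at N f i : i < N -> parts N (incr_at f i) = (parts N f).+1.
Proof.
move=> iN; rewrite /parts (big_incr_at _ (fun _ x => x) f iN).
by rewrite [in RHS](bigD1 (Ordinal iN)).
Qed.

Lemma weight_incr_at N f i : i < N -> weight N (incr_at f i) = weight N f + i.+1.
Proof.
move=> iN; rewrite /weight (big_incr_at _ (fun t x => t.+1 * x) f iN).
by rewrite [in RHS](bigD1 (Ordinal iN)) //= mulnS; ring.
Qed.

Lemma denom_incr_at N f i : i < N ->
  denom N (incr_at f i) = denom N f * ((f i).+1 * (i.+1)`!).
Proof.
move=> iN; rewrite /denom (big_incr_at _ (fun t x => x`! * (t.+1)`! ^ x) f iN).
by rewrite [in RHS](bigD1 (Ordinal iN)) //= factS expnS; ring.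
Qed.

Lemma incr_atK i : cancel (incr_at^~ i) (decr_at^~ i).
Proof. by move=> f; apply: functional_extensionality => t; rewrite /decr_at /incr_at addnK. Qed.

Lemma decr_atK f i : 0 < f i -> incr_at (decr_at f i) i = f.
Proof.
move=> fi; apply: functional_extensionality => t; rewrite /incr_at /decr_at.
by case: eqP => [->|]; rewrite ?subn0 ?addn0 // subnK.
Qed.

Lemma weight_decr_at N f i : i < N -> 0 < f i ->
  weight N (decr_at f i) + i.+1 = weight N f.
Proof. by move=> iN fi; rewrite -weight_incr_at // decr_atK. Qed.

Lemma denom_decr_at N f i : i < N -> 0 < f i ->
  denom N f = denom N (decr_at f i) * (f i * (i.+1)`!).
Proof.
move=> iN fi; rewrite -{1}(decr_atK fi) denom_incr_at // /decr_at eqxx.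
by rewrite subn1 prednK.
Qed.

Lemma denom_gt0 N f : 0 < denom N f.
Proof. by apply: prodn_gt0 => t; rewrite muln_gt0 fact_gt0 expn_gt0 fact_gt0. Qed.

Lemma mul_le_weight N f t : t < N -> t.+1 * f t <= weight N f.
Proof. by move=> tN; rewrite /weight (bigD1 (Ordinal tN)) //= leq_addr. Qed.

Lemma le_parts N f t : t < N -> f t <= parts N f.
Proof. by move=> tN; rewrite /parts (bigD1 (Ordinal tN)) //= leq_addr. Qed.

Lemma parts_le_weight N f : parts N f <= weight N f.
Proof. by apply: leq_sum => t _; rewrite leq_pmull. Qed.

Lemma fact_weight_sum N f m : weight N f = m.+1 ->
  m.+1`! = \sum_(t < N) m`! * (t.+1 * f t).
Proof. by move=> wf; rewrite -big_distrr /= -/(weight N f) wf factS mulnC. Qed.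

Lemma fact_mul_bin m t x : t <= m ->
  m`! * (t.+1 * x) = 'C(m, t) * (m - t)`! * (x * (t.+1)`!).
Proof. by move=> tm; rewrite -(bin_fact tm) factS; ring. Qed.

Lemma denom_dvd_fact N n f : weight N f = n -> denom N f %| n`!.
Proof.
elim/ltn_ind: n f => -[_ f wf|m IH f wf].
  suff -> : denom N f = 1 by [].
  apply: big1 => t _; have := mul_le_weight f (ltn_ord t).
  by rewrite wf leqn0 muln_eq0 /= => /eqP ->.
rewrite (fact_weight_sum wf) dvdn_sum // => t _.
have [->|ft] := posnP (f t); first by rewrite !muln0 dvdn0.
have wt := weight_decr_at (ltn_ord t) ft; rewrite wf in wt.
rewrite fact_mul_bin; last by lia.
rewrite (denom_decr_at (ltn_ord t) ft); apply: dvdn_mul (dvdnn _).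
by apply/dvdn_mull/(IH (m - t)) => //; lia.
Qed.

Lemma fact_term_denom N m f t : t < N -> weight N f = m.+1 ->
  m`! * (t.+1 * f t) = denom N f *
    (if 0 < f t then 'C(m, t) * ((m - t)`! %/ denom N (decr_at f t)) else 0).
Proof.
move=> tN wf; have [->|ft] := posnP (f t); first by rewrite !muln0.
have wt := weight_decr_at tN ft; rewrite wf in wt.
have /denom_dvd_fact/divnK dvd : weight N (decr_at f t) = m - t by lia.
rewrite fact_mul_bin; last by lia.
by rewrite (denom_decr_at tN ft) -[in LHS]dvd; ring.
Qed.

Lemma fact_div_denomS N m f : weight N f = m.+1 ->
  m.+1`! %/ denom N f = \sum_(t < N)
    (if 0 < f t then 'C(m, t) * ((m - t)`! %/ denom N (decr_at f t)) else 0).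
Proof.
move=> wf; rewrite (fact_weight_sum wf).
under eq_bigr => t _ do rewrite (fact_term_denom (ltn_ord t) wf).
by rewrite -big_distrr mulKn ?denom_gt0.
Qed.

Definition occ N (j : {ffun 'I_N -> 'I_N.+1}) (t : nat) : nat :=
  if (insub t : option 'I_N) is Some i then j i else 0.

Definition ffun_of N (f : nat -> nat) : {ffun 'I_N -> 'I_N.+1} :=
  [ffun t : 'I_N => inord (f t)].

Lemma occ_ord N (j : {ffun 'I_N -> 'I_N.+1}) (i : 'I_N) : occ j i = j i.
Proof. by rewrite /occ valK. Qed.

Lemma occ_ge N (j : {ffun 'I_N -> 'I_N.+1}) t : N <= t -> occ j t = 0.
Proof. by move=> Nt; rewrite /occ insubN // -leqNgt. Qed.

Lemma occ_le N (j : {ffun 'I_N -> 'I_N.+1}) t : occ j t <= N.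
Proof. by rewrite /occ; case: insub => // i; rewrite -ltnS ltn_ord. Qed.

Lemma occ_ffun_of N f t : t < N -> occ (ffun_of N f) t = if f t <= N then f t else 0.
Proof. by move=> tN; rewrite /occ insubT /ffun_of ffunE /inord val_insubd. Qed.

Lemma occ_inj N (j1 j2 : {ffun 'I_N -> 'I_N.+1}) :
  (forall t, t < N -> occ j1 t = occ j2 t) -> j1 = j2.
Proof. by move=> eq12; apply/ffunP => i; apply/val_inj; rewrite /= -!occ_ord eq12. Qed.

Lemma occK N (j : {ffun 'I_N -> 'I_N.+1}) : ffun_of N (occ j) = j.
Proof. by apply: occ_inj => t tN; rewrite occ_ffun_of // occ_le. Qed.

Lemma ffun_ofK N f : (forall t, t < N -> f t <= N) -> (forall t, N <= t -> f t = 0) ->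
  occ (ffun_of N f) = f.
Proof.
move=> fN f0; apply: functional_extensionality => t.
by case: (ltnP t N) => [tN|Nt]; [rewrite occ_ffun_of // fN | rewrite occ_ge // f0].
Qed.

Section Bell.
Variable R : comPzRingType.
Local Open Scope ring_scope.

Definition monom N (f : nat -> nat) (y : nat -> R) := \prod_(t < N) y t.+1 ^+ f t.

Lemma monom_incr_at N f i y : (i < N)%N -> monom N (incr_at f i) y = monom N f y * y i.+1.
Proof.
move=> iN; rewrite /monom (big_incr_at _ (fun t x => y t.+1 ^+ x) f iN).
by rewrite [in RHS](bigD1 (Ordinal iN)) //= exprS; ring.
Qed.

(* [bell] with the index type of the multiplicities widened to ['I_N], so that
   polynomials of different degrees live in a common type. *)
Definition bellN N n k (y : nat -> R) : R :=
  \sum_(j : {ffun 'I_N -> 'I_N.+1} |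
          (parts N (occ j) == k) && (weight N (occ j) == n))
    (n`! %/ denom N (occ j))%:R * monom N (occ j) y.

Lemma bellNn n k y : bellN n n k y = bell n k y.
Proof.
rewrite /bellN /parts /weight /denom /monom.
apply: eq_big => [j|j _]; last first.
  by congr ((_ %/ _)%:R * _); apply: eq_bigr => i _; rewrite occ_ord.
by congr ((_ == k) && (_ == n)); apply: eq_bigr => i _; rewrite occ_ord.
Qed.

Lemma bellNS M m k y : (m <= M)%N -> bellN M.+1 m k y = bellN M m k y.
Proof.
move=> mM; rewrite /bellN.
rewrite (reindex_onto (fun j => ffun_of M.+1 (occ j)) (fun J => ffun_of M (occ J))) /=; last first.
  move=> J /andP [_ /eqP wJ]; apply: occ_inj => t tM.
  have := mul_le_weight (occ J) tM; rewrite wJ => tJ.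
  rewrite occ_ffun_of // ifT; last exact: leq_trans (occ_le _ _) (leqnSn _).
  case: (ltnP t M) => [tlt|tge]; first by rewrite occ_ffun_of // ifT //; nia.
  by rewrite occ_ge //; nia.
have occ_lift j : occ (ffun_of M.+1 (@occ M j)) = occ j.
  apply: ffun_ofK => [t _|t Mt]; first exact: leq_trans (occ_le _ _) (leqnSn _).
  by rewrite occ_ge //; lia.
apply: eq_big => [j|j _]; rewrite occ_lift.
  by rewrite occK eqxx andbT /parts /weight !big_ord_recr /= occ_ge // muln0 !addn0.
by rewrite /denom /monom !big_ord_recr /= occ_ge // fact0 expn0 expr0 !muln1 mulr1.
Qed.

Lemma bellN_bell M m k y : (m <= M)%N -> bellN M m k y = bell m k y.
Proof.
elim: M => [|M IH]; first by rewrite leqn0 => /eqP ->; rewrite bellNn.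
by rewrite leq_eqVlt => /orP [/eqP ->|mM]; rewrite ?bellNn // bellNS ?IH.
Qed.

Lemma occ_incr_at N (J : {ffun 'I_N -> 'I_N.+1}) i : (i < N)%N -> (occ J i < N)%N ->
  occ (ffun_of N (incr_at (occ J) i)) = incr_at (occ J) i.
Proof.
move=> iN JiN; apply: ffun_ofK => [t _|t Nt]; rewrite /incr_at.
  by case: eqP => [->|_]; rewrite ?addn1 // addn0 occ_le.
by rewrite occ_ge //; case: eqP => // ti; lia.
Qed.

Lemma occ_decr_at N (J : {ffun 'I_N -> 'I_N.+1}) i :
  occ (ffun_of N (decr_at (occ J) i)) = decr_at (occ J) i.
Proof.
apply: ffun_ofK => [t _|t Nt]; rewrite /decr_at; last by rewrite occ_ge.
exact: leq_trans (leq_subr _ _) (occ_le _ _).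
Qed.

Lemma reindex_incr_at N i (P : pred (nat -> nat)) (G : (nat -> nat) -> R) : (i < N)%N ->
  \sum_(J : {ffun 'I_N -> 'I_N.+1} | P (occ J) && (0 < occ J i)%N) G (occ J) =
  \sum_(J : {ffun 'I_N -> 'I_N.+1} | P (incr_at (occ J) i) && (occ J i < N)%N)
     G (incr_at (occ J) i).
Proof.
move=> iN.
rewrite (reindex_onto (fun J => ffun_of N (incr_at (occ J) i))
                      (fun J => ffun_of N (decr_at (occ J) i))) /=; last first.
  by move=> J /andP [_ Ji]; rewrite occ_decr_at decr_atK // occK.
have occ_full (J : {ffun 'I_N -> 'I_N.+1}) :
    (N <= occ J i)%N -> occ (ffun_of N (incr_at (occ J) i)) i = 0.
  by move=> NJi; rewrite occ_ffun_of // /incr_at eqxx ifF //; lia.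
apply: eq_big => J; case: (ltnP (occ J i) N) => [JiN|NJi].
- by rewrite occ_incr_at // incr_atK occK eqxx /incr_at eqxx addn1 !andbT.
- by rewrite occ_full // ltnn !andbF.
- by rewrite occ_incr_at.
- by rewrite occ_full // ltnn andbF.
Qed.

Lemma bellN_recS n k y : bellN n.+1 n.+1 k.+1 y =
  \sum_(i < n.+1) 'C(n, i)%:R * y i.+1 * bellN n.+1 (n - i)%N k y.
Proof.
rewrite /bellN.
under eq_bigr => J /andP [_ /eqP wJ] do rewrite (fact_div_denomS wJ) natr_sum mulr_suml.
rewrite exchange_big /=; apply: eq_bigr => i _.
pose G f := ('C(n, i) * ((n - i)`! %/ denom n.+1 (decr_at f i)))%N%:R * monom n.+1 f y.
transitivity (\sum_(J : {ffun 'I_n.+1 -> 'I_n.+2} |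
                 (parts n.+1 (occ J) == k.+1) && (weight n.+1 (occ J) == n.+1)
                 && (0 < occ J i)%N) G (occ J)).
  by rewrite [RHS]big_mkcondr; apply: eq_bigr => J _; case: ifP; rewrite ?mul0r.
rewrite (reindex_incr_at (fun f => (parts n.+1 f == k.+1) && (weight n.+1 f == n.+1)) G (ltn_ord i)).
rewrite mulr_sumr; apply: eq_big => [J|J _].
  rewrite parts_incr_at // weight_incr_at // eqSS; case: (_ == k) => //=.
  have iN := ltn_ord i; have le_w := mul_le_weight (occ J) iN.
  by apply/andP/eqP => [[/eqP w _]|w]; [lia | split; [apply/eqP; lia | nia]].
by rewrite /G incr_atK monom_incr_at // natrM; ring.
Qed.

Lemma bellSS n k (y : nat -> R) : bell n.+1 k.+1 y =
  \sum_(i < n.+1) 'C(n, i)%:R * y i.+1 * bell (n - i)%N k y.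
Proof.
rewrite -bellNn bellN_recS; apply: eq_bigr => i _.
by rewrite bellN_bell // (leq_trans (leq_subr _ _)).
Qed.

End Bell.

Section Composition.
Variable R : comPzRingType.
Local Open Scope ring_scope.
Implicit Types p q r y : nat -> R.

Lemma bell_gt n k y : (n < k)%N -> bell n k y = 0.
Proof.
move=> nk; rewrite -bellNn /bellN big1 // => j /andP [/eqP pj /eqP wj].
by have := parts_le_weight n (occ j); lia.
Qed.

Lemma bellS0 n y : bell n.+1 0 y = 0.
Proof.
rewrite -bellNn /bellN big1 // => j /andP [/eqP pj /eqP wj].
suff : weight n.+1 (occ j) = 0%N by rewrite wj.
apply: big1 => t _; have := le_parts (occ j) (ltn_ord t).
by rewrite pj leqn0 => /eqP ->; rewrite muln0.
Qed.

Lemma bell00 y : bell 0 0 y = 1.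
Proof.
rewrite /bell (eq_bigl xpredT) => [|j]; last by rewrite !big_ord0.
rewrite (eq_bigr (fun=> 1)) => [|j _]; last by rewrite !big_ord0 divn1 mulr1.
by rewrite sumr_const card_ffun !card_ord.
Qed.

Lemma eq_bell n k y y' : (forall t, (0 < t <= n)%N -> y t = y' t) ->
  bell n k y = bell n k y'.
Proof.
move=> eq_y; apply: eq_bigr => j _; congr (_ * _); apply: eq_bigr => i _.
by rewrite eq_y // ltn_ord.
Qed.

Lemma ccomp_0 p q : ccomp p q 0 = p 0%N.
Proof. by rewrite /ccomp big_ord1 bell00 mulr1. Qed.

Lemma ccomp_widen p q m M : (m <= M)%N ->
  ccomp p q m = \sum_(k < M.+1) p k * bell m k q.
Proof.
move=> mM; rewrite /ccomp (big_ord_widen M.+1 (fun k => p k * bell m k q)) // big_mkcond.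
apply: eq_bigr => k _; case: ltnP => // mk.
by rewrite bell_gt ?mulr0.
Qed.

Lemma eq_ccomp_r p q q' n : (forall t, (0 < t <= n)%N -> q t = q' t) ->
  ccomp p q n = ccomp p q' n.
Proof. by move=> eq_q; apply: eq_bigr => k _; rewrite (eq_bell _ eq_q). Qed.

Lemma hmulC p q : hmul p q = hmul q p.
Proof.
apply: functional_extensionality => n; rewrite /hmul (reindex_inj rev_ord_inj) /=.
apply: eq_bigr => j _; have jn : (j <= n)%N by rewrite -ltnS ltn_ord.
by rewrite subSS bin_sub // subKn //; ring.
Qed.

Lemma hmulDl p q r : hmul (p \+ q) r = hmul p r \+ hmul q r.
Proof.
apply: functional_extensionality => n; rewrite /hmul /= -big_split /=.
by apply: eq_bigr => h _; ring.
Qed.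

Lemma hmulDr p q r : hmul p (q \+ r) = hmul p q \+ hmul p r.
Proof. by rewrite hmulC hmulDl !(hmulC p). Qed.

Lemma hmul1l p : hmul (hid R) p = p.
Proof.
apply: functional_extensionality => n; rewrite /hmul big_ord_recl big1 => [|i _].
  by rewrite bin0 subn0 /hid /= !mul1r addr0.
by rewrite /hid /= mulr0 mul0r.
Qed.

Lemma hmul1r p : hmul p (hid R) = p.
Proof. by rewrite hmulC hmul1l. Qed.

Lemma eq_hmul_l p p' q n : (forall m, (m <= n)%N -> p m = p' m) ->
  hmul p q n = hmul p' q n.
Proof. by move=> eq_p; apply: eq_bigr => i _; rewrite eq_p // -ltnS ltn_ord. Qed.

Lemma lminus_hmul p q : lminus (hmul p q) = hmul (lminus p) q \+ hmul p (lminus q).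
Proof.
apply: functional_extensionality => n; rewrite /lminus /hmul /= big_ord_recl /=.
under eq_bigr do rewrite /bump /= binS natrD !mulrDl.
rewrite big_split /= addrA addrC; congr (_ + _).
rewrite [in RHS]big_ord_recl big_ord_recr /= (bin_small (ltnSn n)) !mul0r addr0.
rewrite !subn0 !bin0; congr (_ + _); apply: eq_bigr => i _.
by rewrite /bump /= !add1n -subSn ?subSS.
Qed.

Lemma hmulA p q r : hmul (hmul p q) r = hmul p (hmul q r).
Proof.
apply: functional_extensionality => n; elim: n p q r => [|n IH] p q r.
  by rewrite /hmul !big_ord1 /=; ring.
change (lminus (hmul (hmul p q) r) n = lminus (hmul p (hmul q r)) n).
by rewrite !lminus_hmul !hmulDl !hmulDr /= !IH; ring.
Qed.

Lemma lminus_ccomp p q : lminus (ccomp p q) = hmul (ccomp (lminus p) q) (lminus q).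
Proof.
apply: functional_extensionality => n; rewrite hmulC /hmul {1}/ccomp /lminus.
rewrite big_ord_recl bellS0 mulr0 add0r.
under eq_bigr do rewrite bellSS mulr_sumr.
rewrite exchange_big /=; apply: eq_bigr => i _.
rewrite (ccomp_widen _ _ (leq_subr i n)) !mulr_sumr.
by apply: eq_bigr => k _; ring.
Qed.

Lemma ccompDl p q r : ccomp (p \+ q) r = ccomp p r \+ ccomp q r.
Proof.
apply: functional_extensionality => n; rewrite /ccomp /= -big_split /=.
by apply: eq_bigr => i _; rewrite mulrDl.
Qed.

Lemma ccomp_hmul p q r : ccomp (hmul p q) r = hmul (ccomp p r) (ccomp q r).
Proof.
apply: functional_extensionality => n.
elim/ltn_ind: n p q r => -[|n] IH p q r; first by rewrite ccomp_0 /hmul !big_ord1 !ccomp_0.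
change (lminus (ccomp (hmul p q) r) n = lminus (hmul (ccomp p r) (ccomp q r)) n).
rewrite lminus_ccomp lminus_hmul ccompDl.
rewrite (@eq_hmul_l _ (hmul (ccomp (lminus p) r) (ccomp q r) \+
                       hmul (ccomp p r) (ccomp (lminus q) r))) => [|m mn]; last by rewrite /= !IH.
rewrite hmulDl lminus_hmul /= !lminus_ccomp !hmulA.
by rewrite (hmulC (ccomp q r)).
Qed.

Lemma ccompA p q r : ccomp (ccomp p q) r = ccomp p (ccomp q r).
Proof.
apply: functional_extensionality => n.
elim/ltn_ind: n p => -[|n] IH p; first by rewrite !ccomp_0.
change (lminus (ccomp (ccomp p q) r) n = lminus (ccomp p (ccomp q r)) n).
rewrite !lminus_ccomp ccomp_hmul hmulA.
by apply: eq_hmul_l => m mn; rewrite IH.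
Qed.

Lemma lminus_cid : lminus (cid R) = hid R.
Proof. by apply: functional_extensionality. Qed.

Lemma ccompx1 p : ccomp p (cid R) = p.
Proof.
apply: functional_extensionality => n; elim: n p => [|n IH] p; first by rewrite ccomp_0.
change (lminus (ccomp p (cid R)) n = lminus p n).
by rewrite lminus_ccomp lminus_cid hmul1r IH.
Qed.

Lemma ccomp_hidl q : ccomp (hid R) q = hid R.
Proof.
apply: functional_extensionality => -[|n]; first by rewrite ccomp_0.
rewrite /ccomp big_ord_recl big1 => [|k _]; last by rewrite mul0r.
by rewrite bellS0 mulr0 addr0.
Qed.

Lemma ccomp1x q : q 0%N = 0 -> ccomp (cid R) q = q.
Proof.
move=> q0; apply: functional_extensionality => -[|n]; first by rewrite ccomp_0 q0.
change (lminus (ccomp (cid R) q) n = lminus q n).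
by rewrite lminus_ccomp lminus_cid ccomp_hidl hmul1l.
Qed.

End Composition.

Section CausalFixpoint.
Variables (T : Type) (x0 : T) (F : (nat -> T) -> nat -> T).
Hypothesis F_causal :
  forall c c' n, (forall t, t < n -> c t = c' t) -> F c n = F c' n.

Definition causal_fix n := iter n.+1 F (fun=> x0) n.

Lemma iter_causal_le k l t : k <= l -> t < k ->
  iter k F (fun=> x0) t = iter l F (fun=> x0) t.
Proof.
have iterS_eq m s : s < m -> iter m F (fun=> x0) s = iter m.+1 F (fun=> x0) s.
  by elim: m s => // m IH s sm; apply: F_causal => r rs; apply: IH; lia.
elim: l => [|l IH] kl tk; first by lia.
rewrite leq_eqVlt in kl; case/orP: kl => [/eqP -> //|kl].
rewrite IH // iterS_eq //; lia.
Qed.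

Lemma causal_fixE n : causal_fix n = F causal_fix n.
Proof. by apply: F_causal => t tn; rewrite /causal_fix (@iter_causal_le t.+1 n). Qed.

End CausalFixpoint.

Section Inverse.
Variable R : comPzRingType.
Local Open Scope ring_scope.

(* Coefficient [n.+1] of [ccomp b c = cid R], by the chain rule, is
   [b 1 * c n.+1 + (terms involving only c 1, ..., c n) = hid R n];
   [rinv_step] solves it for [c n.+1]. *)
Definition rinv_step (b : nat -> R) u (c : nat -> R) (m : nat) : R :=
  if m is n.+1 then
    u * (hid R n - \sum_(h < n) 'C(n, h.+1)%:R * ccomp (lminus b) c h.+1 * c (n - h)%N)
  else 0.

Lemma rinv_step_causal b u c c' n : (forall t, (t < n)%N -> c t = c' t) ->
  rinv_step b u c n = rinv_step b u c' n.
Proof.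
case: n => [//|n] eq_c /=; congr (_ * (_ - _)); apply: eq_bigr => h _.
have hn := ltn_ord h; rewrite eq_c; last by lia.
by congr (_ * _ * _); apply: eq_ccomp_r => t ht; apply: eq_c; lia.
Qed.

Lemma ccomp_rinv (b : nat -> R) u : b 0%N = 0 -> u * b 1%N = 1 ->
  exists2 c, c 0%N = 0 & ccomp b c = cid R.
Proof.
move=> b0 ub1; pose c := causal_fix 0 (rinv_step b u).
have cE : forall n, c n = rinv_step b u c n := causal_fixE 0 (@rinv_step_causal b u).
exists c; first by rewrite cE.
apply: functional_extensionality => -[|n]; first by rewrite ccomp_0.
change (lminus (ccomp b c) n = lminus (cid R) n).
rewrite lminus_ccomp /hmul big_ord_recl ccomp_0 bin0 subn0 /lminus [c n.+1]cE /=.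
rewrite [X in _ + X](eq_bigr (fun h : 'I_n =>
  'C(n, h.+1)%:R * ccomp (lminus b) c h.+1 * c (n - h)%N)).
  by rewrite mul1r mulrA (mulrC (b 1%N)) ub1 mul1r subrK.
by move=> h _; rewrite /bump add1n subnSK.
Qed.

Lemma ccomp_inverse (b : nat -> R) u : b 0%N = 0 -> u * b 1%N = 1 ->
  exists2 c, c 0%N = 0 & ccomp c b = cid R /\ ccomp b c = cid R.
Proof.
move=> b0 ub1; have [c c0 bc] := ccomp_rinv b0 ub1.
have bc1 : b 1%N * c 1%N = 1.
  have := congr1 (fun f => lminus f 0%N) bc.
  by rewrite /= lminus_ccomp /hmul big_ord1 ccomp_0 bin0 mul1r.
have [e e0 ce] := ccomp_rinv c0 bc1.
have be : b = e by rewrite -[b]ccompx1 -ce -ccompA bc ccomp1x.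
by exists c => //; split => //; rewrite be.
Qed.

End Inverse.

Local Open Scope ring_scope.

Theorem mainTheorem1 (R : comPzRingType) (a : nat -> R)
    (ha0 : exists u : R, u * a 0%N = 1 /\ a 0%N * u = 1) :
  (exists c : nat -> R, c 0%N = 0 /\
     (forall n, ccomp c (lplus0 a) n = cid R n /\ ccomp (lplus0 a) c n = cid R n)) /\
  (forall c : nat -> R, c 0%N = 0 ->
     (forall n, ccomp c (lplus0 a) n = cid R n /\ ccomp (lplus0 a) c n = cid R n) ->
     forall n, hmul a (ccomp (lminus c) (lplus0 a)) n = hid R n /\
               hmul (ccomp (lminus c) (lplus0 a)) a n = hid R n).
Proof.
have [u [ua _]] := ha0.
split.
  have [c c0 [cb bc]] := ccomp_inverse (b := lplus0 a) erefl ua.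
  by exists c; split => // n; rewrite cb bc.
move=> c _ inv_c n.
have cb : ccomp c (lplus0 a) = cid R.
  by apply: functional_extensionality => m; case: (inv_c m).
have ca : hmul (ccomp (lminus c) (lplus0 a)) a = hid R.
  by rewrite -lminus_cid -cb lminus_ccomp.
by rewrite hmulC ca.
Qed.
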